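(* Let $N\geq 0$ be an integer. For every real $t\neq 0$, \[ (-1)^N\left(\frac{\tanh t}{t}-\sum_{j=1}^{N}\frac{2^{2j}(2^{2j}-1)B_{2j}}{(2j)!}t^{2j-2}\right)>0 . \] In particular, for every integer $m\geq 1$ and real $t\neq0$, \[ \sum_{j=1}^{2m}\frac{2^{2j}(2^{2j}-1)B_{2j}}{(2j)!}t^{2j-2}<\frac{\tanh t}{t}<\sum_{j=1}^{2m-1}\frac{2^{2j}(2^{2j}-1)B_{2j}}{(2j)!}t^{2j-2}. \]
   Context: The Bernoulli numbers $B_n$ are defined by $\frac{t}{e^t-1}=\sum_{n=0}^\infty B_n\frac{t^n}{n!}$ for $|t|<2\pi$. An empty sum is understood to be zero. *)

From Stdlib Require Import Reals Arith.
Open Scope R_scope.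

(* The Bernoulli-number generating function property (paper's definition):
   t/(e^t-1) = sum_{n>=0} B_n t^n/n!  for 0 < |t| < 2*pi.
   (At t = 0 the left side is the removable value 1; we only require t <> 0.) *)
Definition bernoulli_gf (B : nat -> R) : Prop :=
  forall t : R, t <> 0 -> Rabs t < 2 * PI ->
    infinite_sum (fun n => B n * t ^ n / INR (fact n)) (t / (exp t - 1)).

Definition tanh_term (B : nat -> R) (j : nat) (t : R) : R :=
  2 ^ (2 * j)%nat * (2 ^ (2 * j)%nat - 1) * B (2 * j)%nat / INR (fact (2 * j)) * t ^ (2 * j - 2)%nat.

Fixpoint tanh_partial (B : nat -> R) (N : nat) (t : R) : R :=
  match N with
  | O => 0
  | S k => tanh_partial B k t + tanh_term B (S k) t
  end.

From Coquelicot Require Import Coquelicot.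
From Stdlib Require Import Reals Lra Lia Arith.
Open Scope R_scope.

(* The partial fraction expansion tanh t / t = sum_k 8 / (a_k^2 + 4 t^2), a_k = (2k+1) PI,
   has an exact finite version with m terms, obtained by summing the Poisson kernel over the
   2m-th roots of -1; Tannery's theorem lets m go to infinity.  Expanding each fraction
   geometrically in x = 4 t^2, the remainder after N terms is
   (-1)^N sum_k 8 x^N / (a_k^(2N) (a_k^2 + x)), which has the sign of (-1)^N for t <> 0.
   Finally t tanh t = 4t/(e^(4t)-1) - 2t/(e^(2t)-1) + t, so by uniqueness of power series
   coefficients the coefficients of this expansion are the Bernoulli expressions of the
   statement. *)

(* Unlike [sum_n] and [sum_f_R0], [fsum f n] has exactly [n] terms. *)
Fixpoint fsum (f : nat -> R) (n : nat) : R :=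
  match n with O => 0 | S n => fsum f n + f n end.

Lemma fsum_S f n : fsum f (S n) = fsum f n + f n.
Proof. reflexivity. Qed.

Lemma fsum_ext f g n : (forall i, (i < n)%nat -> f i = g i) -> fsum f n = fsum g n.
Proof.
  induction n as [|n IH]; intros Hfg; simpl; auto.
  rewrite IH, (Hfg n) by first [lia | intros; apply Hfg; lia]; reflexivity.
Qed.

Lemma fsum_plus f g n : fsum (fun i => f i + g i) n = fsum f n + fsum g n.
Proof. induction n; simpl; [lra|]. rewrite IHn; lra. Qed.

Lemma fsum_minus f g n : fsum (fun i => f i - g i) n = fsum f n - fsum g n.
Proof. induction n; simpl; [lra|]. rewrite IHn; lra. Qed.

Lemma fsum_opp f n : fsum (fun i => - f i) n = - fsum f n.
Proof. induction n; simpl; [lra|]. rewrite IHn; lra. Qed.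

Lemma fsum_scal c f n : fsum (fun i => c * f i) n = c * fsum f n.
Proof. induction n; simpl; [lra|]. rewrite IHn; lra. Qed.

Lemma fsum_const c n : fsum (fun _ => c) n = INR n * c.
Proof. induction n; simpl fsum; [simpl; lra|]. rewrite IHn, S_INR; lra. Qed.

Lemma fsum_shift f n : fsum f (S n) = f O + fsum (fun i => f (S i)) n.
Proof. induction n; simpl in *; [lra|]. rewrite IHn; lra. Qed.

Lemma fsum_split f a b : fsum f (a + b) = fsum f a + fsum (fun i => f (a + i)%nat) b.
Proof.
  induction b as [|b IH]; simpl; [rewrite Nat.add_0_r; lra|].
  rewrite Nat.add_succ_r; simpl. rewrite IH; lra.
Qed.

Lemma fsum_rev f n : fsum f n = fsum (fun i => f (n - 1 - i)%nat) n.
Proof.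
  induction n as [|n IH]; auto.
  rewrite (fsum_shift (fun i => f (S n - 1 - i)%nat)), fsum_S, IH.
  replace (S n - 1 - 0)%nat with n by lia. rewrite Rplus_comm. f_equal.
  apply fsum_ext. intros; f_equal; lia.
Qed.

Lemma fsum_swap (g : nat -> nat -> R) n m :
  fsum (fun i => fsum (fun j => g i j) m) n = fsum (fun j => fsum (fun i => g i j) n) m.
Proof.
  induction n; simpl.
  - clear. induction m; simpl; lra.
  - rewrite IHn, <- fsum_plus. auto.
Qed.

Lemma fsum_telescope g n : fsum (fun k => g (S k) - g k) n = g n - g O.
Proof. induction n; simpl; [lra|]. rewrite IHn; lra. Qed.

Lemma fsum_abs f n : Rabs (fsum f n) <= fsum (fun i => Rabs (f i)) n.
Proof.
  induction n; simpl; [rewrite Rabs_R0; lra|].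
  eapply Rle_trans; [apply Rabs_triang | lra].
Qed.

Lemma fsum_le f g n : (forall i, (i < n)%nat -> f i <= g i) -> fsum f n <= fsum g n.
Proof.
  induction n as [|n IH]; simpl; intros Hfg; [lra|].
  assert (f n <= g n) by (apply Hfg; lia).
  assert (fsum f n <= fsum g n) by (apply IH; intros; apply Hfg; lia). lra.
Qed.

Lemma is_series_fsumP f l :
  is_series f l <->
  forall eps, 0 < eps -> exists N, forall n, (N <= n)%nat -> Rabs (fsum f n - l) < eps.
Proof.
  assert (Hsum : forall n, fsum f (S n) = sum_f_R0 f n).
  { induction n; simpl in *; [lra|]. rewrite <- IHn. reflexivity. }
  rewrite is_series_Reals. split.
  - intros Hf eps Heps. destruct (Hf eps Heps) as [N HN].
    exists (S N). intros [|n] Hn; [lia|]. rewrite Hsum. apply HN. lia.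
  - intros Hf eps Heps. destruct (Hf eps Heps) as [N HN].
    exists N. intros n Hn. unfold R_dist. rewrite <- Hsum. apply HN. lia.
Qed.

Lemma is_series_zero : is_series (fun _ => 0) 0.
Proof.
  apply is_series_fsumP. intros eps Heps. exists O. intros n _.
  rewrite fsum_const, Rmult_0_r, Rminus_0_r, Rabs_R0; auto.
Qed.

Lemma is_series_fsum (g : nat -> nat -> R) (L : nat -> R) N :
  (forall j, is_series (g j) (L j)) ->
  is_series (fun k => fsum (fun j => g j k) N) (fsum L N).
Proof.
  intros Hg. induction N as [|N IH]; simpl.
  - exact is_series_zero.
  - exact (is_series_plus _ _ _ _ IH (Hg N)).
Qed.

Lemma is_series_pos (a : nat -> R) l : is_series a l -> (forall k, 0 < a k) -> 0 < l.
Proof.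
  intros Ha Hpos.
  assert (Htail : is_series (fun k => a (S k)) (l - a O)).
  { apply (is_series_incr_1 a). unfold plus; simpl.
    replace (l - a O + a O)%R with l by lra. exact Ha. }
  assert (Hle : Series (fun _ => 0) <= Series (fun k => a (S k))).
  { apply Series_le; [intros k; specialize (Hpos (S k)); lra | eexists; exact Htail]. }
  rewrite (is_series_unique _ _ is_series_zero), (is_series_unique _ _ Htail) in Hle.
  specialize (Hpos O). lra.
Qed.

Lemma eq0_of_geom_bound x C r : 0 <= r < 1 -> (forall L, Rabs x <= C * r ^ L) -> x = 0.
Proof.
  intros Hr Hx. destruct (Req_dec x 0) as [|Hx0]; auto. exfalso.
  pose proof (Rabs_pos_lt x Hx0) as Hax.
  assert (HC : 0 < C) by (specialize (Hx O); rewrite pow_O, Rmult_1_r in Hx; lra).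
  destruct (pow_lt_1_zero r ltac:(rewrite Rabs_pos_eq; lra) (Rabs x / C)) as [N HN].
  { apply Rdiv_lt_0_compat; auto. }
  specialize (HN N (le_n _)). specialize (Hx N).
  rewrite Rabs_pos_eq in HN by (apply pow_le; lra).
  apply (Rmult_lt_compat_l C) in HN; auto.
  replace (C * (Rabs x / C)) with (Rabs x) in HN by (field; lra). lra.
Qed.

Definition odd_pi (k : nat) : R := (2 * INR k + 1) * PI.

Lemma odd_pi_ge1 k : 1 <= odd_pi k.
Proof. unfold odd_pi. pose proof (pos_INR k). pose proof PI2_3_2. nra. Qed.

(* [node n k], [k < n], are the arguments of the [n]-th roots of [-1]. *)
Definition node (n k : nat) : R := odd_pi k / INR n.

Definition cos_node_sum (n m : nat) : R := fsum (fun k => cos (INR m * node n k)) n.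

Lemma cos_node_sum_eq0 n m : (0 < m < n)%nat -> cos_node_sum n m = 0.
Proof.
  intros Hm. unfold cos_node_sum.
  set (th := INR m * PI / INR n).
  assert (Hn : 0 < INR n) by (apply lt_0_INR; lia).
  assert (Hth : 0 < th < PI).
  { assert (0 < INR m) by (apply lt_0_INR; lia).
    assert (INR m < INR n) by (apply lt_INR; lia).
    pose proof PI_RGT_0. unfold th. split; [apply Rdiv_lt_0_compat; nra|].
    apply Rmult_lt_reg_r with (INR n); auto. field_simplify; nra. }
  assert (Hs : 0 < sin th) by (apply sin_gt_0; lra).
  apply Rmult_eq_reg_l with (2 * sin th); [|lra]. rewrite Rmult_0_r, <- fsum_scal.
  (* 2 sin(th) cos((2k+1) th) = sin(2(k+1) th) - sin(2k th) telescopes *)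
  rewrite (fsum_ext _ (fun k => (fun j => sin (2 * INR j * th)) (S k) - (fun j => sin (2 * INR j * th)) k)).
  - rewrite (fsum_telescope (fun j => sin (2 * INR j * th))). simpl. rewrite Rmult_0_r, Rmult_0_l, sin_0.
    apply Rminus_diag_eq, sin_eq_0_1. exists (2 * Z.of_nat m)%Z.
    rewrite mult_IZR, <- INR_IZR_INZ. unfold th. field. lra.
  - intros i _. rewrite S_INR. unfold node, odd_pi.
    replace (INR m * ((2 * INR i + 1) * PI / INR n)) with ((2 * INR i + 1) * th) by (unfold th; field; lra).
    replace (2 * (INR i + 1) * th) with ((2 * INR i + 1) * th + th) by ring.
    replace (2 * INR i * th) with ((2 * INR i + 1) * th - th) by ring.
    rewrite sin_plus, sin_minus. ring.
Qed.

Lemma cos_node_sum_0 n : cos_node_sum n 0 = INR n.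
Proof.
  unfold cos_node_sum. rewrite (fsum_ext _ (fun _ => 1)), fsum_const; [lra|].
  intros; simpl; rewrite Rmult_0_l; apply cos_0.
Qed.

Lemma cos_node_sum_shift n m : (0 < n)%nat -> cos_node_sum n (n + m) = - cos_node_sum n m.
Proof.
  intros Hn. unfold cos_node_sum. rewrite <- fsum_opp. apply fsum_ext. intros k _.
  unfold node, odd_pi. rewrite plus_INR.
  assert (0 < INR n) by (apply lt_0_INR; lia).
  replace ((INR n + INR m) * ((2 * INR k + 1) * PI / INR n)) with
    ((INR m * ((2 * INR k + 1) * PI / INR n) + PI) + 2 * INR k * PI) by (field; lra).
  rewrite cos_period, neg_cos. ring.
Qed.

Lemma fsum_geom_cos_node_sum q n L : (0 < n)%nat ->
  (1 + q ^ n) * fsum (fun m => q ^ m * cos_node_sum n m) (n * L) = INR n * (1 - (- q ^ n) ^ L).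
Proof.
  intros Hn. induction L as [|L IH]; [rewrite Nat.mul_0_r; simpl; ring|].
  replace (n * S L)%nat with (n + n * L)%nat by lia.
  rewrite fsum_split. destruct n as [|n]; [lia|].
  rewrite fsum_shift, (fsum_ext _ (fun _ => 0)), fsum_const, cos_node_sum_0.
  2: { intros i Hi. rewrite cos_node_sum_eq0 by lia. ring. }
  rewrite (fsum_ext _ (fun i => - q ^ S n * (q ^ i * cos_node_sum (S n) i))), fsum_scal.
  2: { intros i _. rewrite cos_node_sum_shift by lia. rewrite pow_add. ring. }
  set (T := fsum (fun i => q ^ i * cos_node_sum (S n) i) (S n * L)) in *.
  transitivity ((1 + q ^ S n) * INR (S n) - q ^ S n * ((1 + q ^ S n) * T)); [simpl pow; ring|].
  rewrite IH. simpl. ring.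
Qed.

Definition cos_geom_sum (q ph : R) (M : nat) : R := fsum (fun m => q ^ m * cos (INR m * ph)) M.

Lemma cos_geom_sum_closed q ph M :
  (1 - 2 * q * cos ph + q ^ 2) * cos_geom_sum q ph M =
  1 - q * cos ph - q ^ M * cos (INR M * ph) + q ^ S M * cos (INR M * ph - ph).
Proof.
  induction M as [|M IH]; unfold cos_geom_sum in *; simpl fsum.
  - simpl. rewrite Rmult_0_l, cos_0, Rminus_0_l, cos_neg. ring.
  - rewrite Rmult_plus_distr_l, IH, S_INR.
    replace ((INR M + 1) * ph - ph) with (INR M * ph) by ring.
    replace ((INR M + 1) * ph) with (INR M * ph + ph) by ring.
    rewrite cos_plus, cos_minus. simpl. ring.
Qed.

(* The Poisson kernel [Re (1 / (1 - q e^(i ph)))] = [sum_m q^m cos (m ph)]. *)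
Definition poisson (q ph : R) : R := (1 - q * cos ph) / (1 - 2 * q * cos ph + q ^ 2).

Lemma poisson_denom_ge q ph : 0 <= q < 1 -> (1 - q) ^ 2 <= 1 - 2 * q * cos ph + q ^ 2.
Proof. intros Hq. pose proof (COS_bound ph). nra. Qed.

Lemma poisson_sub_cos_geom_sum q ph M : 0 <= q < 1 ->
  Rabs (poisson q ph - cos_geom_sum q ph M) <= 2 * q ^ M / (1 - q) ^ 2.
Proof.
  intros Hq. pose proof (poisson_denom_ge q ph Hq) as Hden.
  assert (H1q : 0 < (1 - q) ^ 2) by (apply pow_lt; lra).
  set (D := 1 - 2 * q * cos ph + q ^ 2) in *.
  assert (E : poisson q ph - cos_geom_sum q ph M =
            (q ^ M * cos (INR M * ph) - q ^ S M * cos (INR M * ph - ph)) / D).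
  { pose proof (cos_geom_sum_closed q ph M). fold D in H.
    unfold poisson. fold D. apply Rmult_eq_reg_l with D; [|lra].
    field_simplify; lra. }
  assert (Hnum : Rabs (q ^ M * cos (INR M * ph) - q ^ S M * cos (INR M * ph - ph)) <= 2 * q ^ M).
  { pose proof (COS_bound (INR M * ph)). pose proof (COS_bound (INR M * ph - ph)).
    assert (0 <= q ^ M) by (apply pow_le; lra).
    assert (q ^ S M <= q ^ M) by (simpl; nra).
    assert (0 <= q ^ S M) by (apply pow_le; lra).
    apply Rabs_le; split; nra. }
  rewrite E, Rabs_div, (Rabs_pos_eq D) by lra.
  unfold Rdiv. apply Rmult_le_compat; try lra; [apply Rabs_pos | left; apply Rinv_0_lt_compat; lra |].
  apply Rinv_le_contravar; lra.
Qed.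

Lemma poisson_node_sum q n : 0 <= q < 1 -> (0 < n)%nat ->
  fsum (fun k => poisson q (node n k)) n = INR n / (1 + q ^ n).
Proof.
  intros Hq Hn.
  assert (Hqn : 0 <= q ^ n < 1) by (split; [apply pow_le; lra | apply pow_lt_1_compat; [lra|lia]]).
  assert (H1q : 0 < (1 - q) ^ 2) by (apply pow_lt; lra).
  apply Rminus_diag_uniq, (eq0_of_geom_bound _ (INR n * (2 / (1 - q) ^ 2) + INR n) (q ^ n)); [lra|].
  (* expand each kernel up to [q^(nL)] and sum over the nodes first *)
  intros L.
  assert (Hswap : fsum (fun k => cos_geom_sum q (node n k) (n * L)) n =
                  fsum (fun m => q ^ m * cos_node_sum n m) (n * L)).
  { unfold cos_geom_sum, cos_node_sum. rewrite fsum_swap.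
    apply fsum_ext. intros. rewrite fsum_scal. auto. }
  replace (fsum (fun k => poisson q (node n k)) n - INR n / (1 + q ^ n)) with
    (fsum (fun k => poisson q (node n k) - cos_geom_sum q (node n k) (n * L)) n
     + ((1 + q ^ n) * fsum (fun m => q ^ m * cos_node_sum n m) (n * L) - INR n) / (1 + q ^ n))
    by (rewrite fsum_minus, Hswap; field; lra).
  rewrite fsum_geom_cos_node_sum, Rmult_plus_distr_r by auto.
  eapply Rle_trans; [apply Rabs_triang | apply Rplus_le_compat].
  - eapply Rle_trans; [apply fsum_abs|].
    replace (INR n * (2 / (1 - q) ^ 2) * (q ^ n) ^ L) with
      (fsum (fun _ => 2 * (q ^ n) ^ L / (1 - q) ^ 2) n) by (rewrite fsum_const; field; lra).
    apply fsum_le. intros k _. rewrite <- pow_mult. apply poisson_sub_cos_geom_sum; auto.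
  - replace (INR n * (1 - (- q ^ n) ^ L) - INR n) with (- (INR n * (- q ^ n) ^ L)) by ring.
    rewrite Rabs_div, Rabs_Ropp, Rabs_mult, <- RPow_abs, Rabs_Ropp by lra.
    rewrite (Rabs_pos_eq (INR n)), (Rabs_pos_eq (q ^ n)), (Rabs_pos_eq (1 + _)) by (apply pos_INR || lra).
    assert (0 <= INR n * (q ^ n) ^ L) by (apply Rmult_le_pos; [apply pos_INR | apply pow_le; lra]).
    apply Rmult_le_reg_r with (1 + q ^ n); [lra|].
    unfold Rdiv. rewrite Rmult_assoc, Rinv_l by lra. nra.
Qed.

Lemma exp_pow x n : exp x ^ n = exp (INR n * x).
Proof.
  induction n as [|n IH]; [simpl; rewrite Rmult_0_l, exp_0; auto|].
  rewrite S_INR. simpl pow. rewrite IH, <- exp_plus. f_equal. ring.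
Qed.

Lemma tanh_exp z : tanh z = (1 - exp (- z) ^ 2) / (1 + exp (- z) ^ 2).
Proof.
  unfold tanh, sinh, cosh.
  assert (exp z * exp (- z) = 1) by (rewrite <- exp_plus, Rplus_opp_r, exp_0; auto).
  pose proof (exp_pos z). pose proof (exp_pos (- z)).
  assert (0 < exp (- z) ^ 2) by (apply pow_lt; auto).
  apply Rmult_eq_reg_r with ((exp z + exp (- z)) / 2 * (1 + exp (- z) ^ 2)).
  2: { apply Rgt_not_eq, Rmult_lt_0_compat; lra. }
  field_simplify; try lra. simpl. nra.
Qed.

Lemma sinh_div_cosh_sub_cos y ph : 0 < y ->
  sinh y / (cosh y - cos ph) = 2 * poisson (exp (- y)) ph - 1.
Proof.
  intros Hy. unfold poisson, sinh, cosh. set (c := cos ph).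
  assert (Hc : c <= 1) by apply COS_bound.
  set (E := exp y). assert (HE : 1 < E) by (unfold E; rewrite <- exp_0; apply exp_increasing; auto).
  replace (exp (- y)) with (/ E) by (unfold E; rewrite exp_Ropp; auto).
  assert (HEE : E + / E > 2).
  { apply Rmult_lt_reg_r with E; [lra|]. rewrite Rmult_plus_distr_r, Rinv_l by lra. nra. }
  assert (H1 : 0 < E * E + 1 - c * (E * 2)).
  { replace (E * E + 1 - c * (E * 2)) with (2 * E * ((E + / E) / 2 - c)) by (field; lra).
    apply Rmult_lt_0_compat; lra. }
  assert (H2 : 0 < 1 - 2 * / E * c + / E ^ 2).
  { replace (1 - 2 * / E * c + / E ^ 2) with ((E * E + 1 - c * (E * 2)) / E ^ 2) by (field; lra).
    apply Rdiv_lt_0_compat; [lra | apply pow_lt; lra]. }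
  field; split; lra.
Qed.

Lemma fsum_sinh_div_cosh_sub_cos y n : 0 < y -> (0 < n)%nat ->
  fsum (fun k => sinh y / (cosh y - cos (node n k))) n = INR n * tanh (INR n * y / 2).
Proof.
  intros Hy Hn.
  rewrite (fsum_ext _ (fun k => 2 * poisson (exp (- y)) (node n k) - 1))
    by (intros; apply sinh_div_cosh_sub_cos; auto).
  rewrite fsum_minus, fsum_scal, fsum_const.
  assert (Hq : 0 <= exp (- y) < 1).
  { split; [left; apply exp_pos | rewrite <- exp_0; apply exp_increasing; lra]. }
  rewrite poisson_node_sum, exp_pow, tanh_exp, exp_pow by auto.
  replace (INR 2 * - (INR n * y / 2)) with (INR n * - y) by (change (INR 2) with 2; field).
  pose proof (exp_pos (INR n * - y)). field. lra.
Qed.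

Lemma cosh_ge1 u : 1 <= cosh u.
Proof.
  unfold cosh. assert (exp u * exp (- u) = 1) by (rewrite <- exp_plus, Rplus_opp_r, exp_0; auto).
  pose proof (exp_pos u). pose proof (exp_pos (- u)).
  pose proof (pow2_ge_0 (exp u - exp (- u))). nra.
Qed.

Lemma cosh_gt1 u : 0 < u -> 1 < cosh u.
Proof.
  intros Hu. unfold cosh. assert (exp u * exp (- u) = 1) by (rewrite <- exp_plus, Rplus_opp_r, exp_0; auto).
  assert (1 < exp u) by (rewrite <- exp_0; apply exp_increasing; auto).
  pose proof (exp_pos (- u)). nra.
Qed.

(* Grouping the [2m] nodes of [fsum_sinh_div_cosh_sub_cos] into conjugate pairs. *)
Definition tanh_fin_term (t : R) (m k : nat) : R :=
  sinh (t / INR m) / (INR m * (cosh (t / INR m) - cos (odd_pi k / (2 * INR m)))).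

Lemma tanh_fsum_fin_term t m : 0 < t -> (0 < m)%nat -> tanh t = fsum (tanh_fin_term t m) m.
Proof.
  intros Ht Hm. assert (Hmr : 0 < INR m) by (apply lt_0_INR; auto).
  pose proof (fsum_sinh_div_cosh_sub_cos (t / INR m) (m + m)
                ltac:(apply Rdiv_lt_0_compat; auto) ltac:(lia)) as H.
  rewrite plus_INR in H. replace ((INR m + INR m) * (t / INR m) / 2) with t in H by (field; lra).
  set (g := fun k => sinh (t / INR m) / (cosh (t / INR m) - cos (node (m + m) k))) in H.
  change (fsum g (m + m) = (INR m + INR m) * tanh t) in H.
  rewrite fsum_split, (fsum_rev (fun i => g (m + i)%nat)) in H.
  rewrite (fsum_ext (fun i => g (m + (m - 1 - i))%nat) g) in H.
  2: { intros i Hi. unfold g. do 2 f_equal. unfold node, odd_pi. rewrite !plus_INR, !minus_INR by lia. simpl INR.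
       replace ((2 * (INR m + (INR m - 1 - INR i)) + 1) * PI / (INR m + INR m)) with
         (- ((2 * INR i + 1) * PI / (INR m + INR m)) + 2 * INR 1 * PI) by (simpl; field; lra).
       rewrite cos_period, cos_neg. auto. }
  apply Rmult_eq_reg_l with (INR m); [|lra].
  replace (INR m * tanh t) with (fsum g m) by lra. rewrite <- fsum_scal.
  apply fsum_ext. intros k _. unfold g, tanh_fin_term, node. rewrite plus_INR.
  replace (INR m + INR m) with (2 * INR m) by ring.
  pose proof (cosh_gt1 (t / INR m) ltac:(apply Rdiv_lt_0_compat; auto)).
  pose proof (COS_bound (odd_pi k / (2 * INR m))).
  field. split; lra.
Qed.

Lemma uniform_cv_finite (h : nat -> nat -> R) (f : nat -> R) n :
  (forall k, Un_cv (fun p => h (S p) k) (f k)) ->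
  forall eps, 0 < eps ->
  exists P, forall p k, (P <= p)%nat -> (k < n)%nat -> Rabs (h (S p) k - f k) < eps.
Proof.
  intros Hcv eps Heps. induction n as [|n [P1 H1]]; [exists O; intros; lia|].
  destruct (Hcv n eps Heps) as [P2 H2].
  exists (max P1 P2). intros p k Hp Hk.
  destruct (Nat.eq_dec k n) as [->|]; [apply H2 | apply H1]; lia.
Qed.

Lemma tannery (h : nat -> nat -> R) (f M : nat -> R) (c : R) :
  ex_series M ->
  (forall m k, (k < m)%nat -> Rabs (h m k) <= M k) ->
  (forall k, Un_cv (fun p => h (S p) k) (f k)) ->
  (forall m, (0 < m)%nat -> fsum (h m) m = c) ->
  is_series f c.
Proof.
  intros [SM HSM] Hdom Hcv Hrow. rewrite is_series_fsumP in HSM |- *.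
  intros eps Heps. destruct (HSM (eps / 6) ltac:(lra)) as [K HK].
  exists K. intros n Hn.
  set (e := eps / (3 * (INR n + 1))).
  assert (He : 0 < e) by (unfold e; apply Rdiv_lt_0_compat; pose proof (pos_INR n); lra).
  assert (Hne : INR n * e < eps / 3).
  { unfold e. pose proof (pos_INR n). apply Rmult_lt_reg_r with (3 * (INR n + 1)); [lra|].
    field_simplify; nra. }
  destruct (uniform_cv_finite h f n Hcv e He) as [P HP].
  set (m := S (max P n)). set (d := (m - n)%nat).
  assert (Hsplit : forall g, fsum g m = fsum g n + fsum (fun i => g (n + i)%nat) d).
  { intros g. replace m with (n + d)%nat at 1 by (unfold d, m; lia). apply fsum_split. }
  assert (Hhead : Rabs (fsum (fun k => h m k - f k) n) <= INR n * e).
  { eapply Rle_trans; [apply fsum_abs|]. rewrite <- fsum_const. apply fsum_le.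
    intros k Hk. left. apply HP; lia. }
  assert (Htail : Rabs (fsum (fun i => h m (n + i)%nat) d) <= fsum M m - fsum M n).
  { eapply Rle_trans; [apply fsum_abs|].
    rewrite Hsplit. ring_simplify.
    apply fsum_le. intros i Hi. apply Hdom. lia. }
  assert (HMcauchy : fsum M m - fsum M n < eps / 3).
  { pose proof (HK m ltac:(lia)) as HKm. pose proof (HK n Hn) as HKn.
    apply Rabs_def2 in HKm. apply Rabs_def2 in HKn. lra. }
  rewrite <- (Hrow m), Hsplit by lia.
  replace (fsum f n - (fsum (h m) n + fsum (fun i => h m (n + i)%nat) d)) with
    (- fsum (fun k => h m k - f k) n - fsum (fun i => h m (n + i)%nat) d) by (rewrite fsum_minus; ring).
  eapply Rle_lt_trans; [apply Rabs_triang|]. rewrite !Rabs_Ropp. lra.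
Qed.

Lemma cv_mul_div_of_derivable_pt_lim f a : f 0 = 0 -> derivable_pt_lim f 0 1 ->
  is_lim_seq (fun p => INR (S p) * f (a / INR (S p))) a.
Proof.
  intros Hf0 Hd. apply is_lim_seq_Reals. intros eps Heps.
  destruct (Req_dec a 0) as [->|Ha].
  - exists O. intros p _. unfold R_dist. unfold Rdiv. rewrite Rmult_0_l, Hf0.
    rewrite Rmult_0_r, Rminus_0_r, Rabs_R0; auto.
  - assert (Hpa : 0 < Rabs a) by (apply Rabs_pos_lt; auto).
    destruct (Hd (eps / Rabs a)) as [d Hdd]; [apply Rdiv_lt_0_compat; auto|].
    pose proof (cond_pos d) as Hd0.
    destruct (INR_unbounded (Rabs a / d)) as [N HN].
    exists N. intros p Hp. unfold R_dist.
    assert (Hp1 : 0 < INR (S p)) by (apply lt_0_INR; lia).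
    assert (INR N <= INR (S p)) by (apply le_INR; lia).
    set (x := a / INR (S p)).
    assert (Hx : x <> 0).
    { unfold x, Rdiv. apply Rmult_integral_contrapositive_currified; [auto | apply Rinv_neq_0_compat; lra]. }
    assert (Hxd : Rabs x < d).
    { unfold x. rewrite Rabs_div, (Rabs_pos_eq (INR (S p))) by lra.
      apply Rmult_lt_reg_r with (INR (S p)); auto.
      replace (Rabs a / INR (S p) * INR (S p)) with (Rabs a) by (field; lra).
      replace (Rabs a) with (Rabs a / d * d) by (field; lra). nra. }
    specialize (Hdd x Hx Hxd). rewrite Rplus_0_l, Hf0, Rminus_0_r in Hdd.
    replace (INR (S p) * f x - a) with (a * (f x / x - 1)) by (unfold x; field; lra).
    rewrite Rabs_mult. apply Rmult_lt_reg_l with (/ Rabs a); [apply Rinv_0_lt_compat; auto|].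
    rewrite <- Rmult_assoc, Rinv_l, Rmult_1_l by lra. unfold Rdiv in Hdd. lra.
Qed.

Lemma cv_mul_sin_div a : is_lim_seq (fun p => INR (S p) * sin (a / INR (S p))) a.
Proof. apply cv_mul_div_of_derivable_pt_lim; [apply sin_0|]. rewrite <- cos_0. apply derivable_pt_lim_sin. Qed.

Lemma cv_mul_sinh_div a : is_lim_seq (fun p => INR (S p) * sinh (a / INR (S p))) a.
Proof.
  apply cv_mul_div_of_derivable_pt_lim; [apply sinh_0|].
  rewrite <- cosh_0. apply derivable_pt_lim_sinh.
Qed.

Lemma cosh_half u : cosh u = 1 + 2 * sinh (u / 2) ^ 2.
Proof.
  unfold cosh, sinh.
  assert (Hhalf : forall v, exp v = exp (v / 2) * exp (v / 2)) by (intros; rewrite <- exp_plus; f_equal; field).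
  rewrite (Hhalf u), (Hhalf (- u)). replace (- u / 2) with (- (u / 2)) by field.
  assert (exp (u / 2) * exp (- (u / 2)) = 1) by (rewrite <- exp_plus, Rplus_opp_r, exp_0; auto).
  simpl. nra.
Qed.

Lemma cos_half v : cos v = 1 - 2 * sin (v / 2) ^ 2.
Proof. replace v with (2 * (v / 2)) at 1 by field. rewrite cos_2a_sin. simpl. ring. Qed.

Lemma sinh_nonneg u : 0 <= u -> 0 <= sinh u.
Proof.
  intros Hu. rewrite <- sinh_0. destruct (Req_dec u 0) as [->|]; [lra|].
  left. apply sinh_lt. lra.
Qed.

Lemma sinh_plus a b : sinh (a + b) = sinh a * cosh b + cosh a * sinh b.
Proof. unfold sinh, cosh. rewrite Ropp_plus_distr, !exp_plus. field. Qed.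

Lemma INR_mul_sinh_le u m : 0 <= u -> INR m * sinh u <= sinh (INR m * u).
Proof.
  intros Hu. induction m as [|m IH]; [simpl; rewrite !Rmult_0_l, sinh_0; lra|].
  rewrite S_INR. replace ((INR m + 1) * u) with (INR m * u + u) by ring. rewrite sinh_plus.
  pose proof (cosh_ge1 u). pose proof (cosh_ge1 (INR m * u)). pose proof (sinh_nonneg u Hu).
  pose proof (sinh_nonneg (INR m * u) ltac:(apply Rmult_le_pos; auto; apply pos_INR)). nra.
Qed.

Lemma sin_ge_third x : 0 <= x <= 2 -> x / 3 <= sin x.
Proof.
  intros Hx. pose proof PI2_3_2. destruct (sin_bound x 0) as [Hs _]; [lra|lra|].
  simpl in Hs. unfold sin_approx, sin_term in Hs. simpl in Hs. nra.
Qed.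

Lemma tanh_fin_term_eq t m k : 0 < t -> (0 < m)%nat ->
  tanh_fin_term t m k = (INR m * sinh (t / INR m)) /
    (2 * (INR m * sinh (t / 2 / INR m)) ^ 2 + 2 * (INR m * sin (odd_pi k / 4 / INR m)) ^ 2).
Proof.
  intros Ht Hm. assert (Hmr : 0 < INR m) by (apply lt_0_INR; auto).
  unfold tanh_fin_term. rewrite cosh_half, cos_half.
  replace (t / INR m / 2) with (t / 2 / INR m) by (field; lra).
  replace (odd_pi k / (2 * INR m) / 2) with (odd_pi k / 4 / INR m) by (field; lra).
  assert (0 < sinh (t / 2 / INR m)).
  { rewrite <- sinh_0. apply sinh_lt, Rdiv_lt_0_compat; lra. }
  set (s1 := sinh (t / 2 / INR m)) in *. set (s2 := sin (odd_pi k / 4 / INR m)).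
  assert (0 < (INR m * s1) ^ 2) by (apply pow_lt; nra).
  assert (0 < s1 ^ 2) by (apply pow_lt; nra).
  pose proof (pow2_ge_0 s2). pose proof (pow2_ge_0 (INR m * s2)).
  field. repeat split; lra.
Qed.

Lemma tanh_fin_term_cv t k : 0 < t ->
  Un_cv (fun p => tanh_fin_term t (S p) k) (8 * t / (4 * t ^ 2 + odd_pi k ^ 2)).
Proof.
  intros Ht. apply is_lim_seq_Reals. pose proof (odd_pi_ge1 k).
  set (al := odd_pi k / 4).
  assert (Hal : 0 < al) by (unfold al; lra).
  pose proof (cv_mul_sinh_div (t / 2)) as Hs. pose proof (cv_mul_sin_div al) as Hc.
  pose proof (is_lim_seq_mult' _ _ _ _ (is_lim_seq_const 2) (is_lim_seq_mult' _ _ _ _ Hs Hs)) as Hs2.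
  pose proof (is_lim_seq_mult' _ _ _ _ (is_lim_seq_const 2) (is_lim_seq_mult' _ _ _ _ Hc Hc)) as Hc2.
  assert (Hne : 2 * (t / 2 * (t / 2)) + 2 * (al * al) <> 0) by nra.
  pose proof (is_lim_seq_div' _ _ _ _ (cv_mul_sinh_div t) (is_lim_seq_plus' _ _ _ _ Hs2 Hc2) Hne) as Hlim.
  replace (8 * t / (4 * t ^ 2 + odd_pi k ^ 2)) with
    (t / (2 * (t / 2 * (t / 2)) + 2 * (al * al))) by (unfold al; field; split; nra).
  eapply is_lim_seq_ext; [|exact Hlim]. intros p. simpl.
  rewrite tanh_fin_term_eq by (auto; lia). unfold al. simpl pow. rewrite !Rmult_1_r. auto.
Qed.

Lemma tanh_fin_term_bound t m k : 0 < t -> (k < m)%nat ->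
  0 <= tanh_fin_term t m k <= sinh t / (2 * (odd_pi k / 12) ^ 2).
Proof.
  intros Ht Hk. assert (Hmr : 0 < INR m) by (apply lt_0_INR; lia).
  rewrite tanh_fin_term_eq by (auto; lia).
  set (x := odd_pi k / 4 / INR m).
  set (c := odd_pi k / 12).
  pose proof (odd_pi_ge1 k). pose proof PI_4. pose proof PI_RGT_0.
  assert (Hkm : odd_pi k <= 2 * INR m * PI).
  { assert (Hk1 : INR (S k) <= INR m) by (apply le_INR; lia).
    rewrite S_INR in Hk1. unfold odd_pi. nra. }
  assert (Hx : 0 < x <= 2).
  { unfold x. split; [apply Rdiv_lt_0_compat; lra|].
    apply Rmult_le_reg_r with (INR m); auto. field_simplify; nra. }
  (* [sin x >= x / 3] on [0, 2] keeps the denominator away from 0 uniformly in [m] *)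
  assert (Hc : c <= INR m * sin x).
  { pose proof (sin_ge_third x ltac:(lra)).
    replace c with (INR m * (x / 3)) by (unfold c, x; field; lra). nra. }
  assert (Hc0 : 0 < c) by (unfold c; lra).
  assert (Hnum : 0 <= INR m * sinh (t / INR m) <= sinh t).
  { assert (Htm : 0 <= t / INR m) by (left; apply Rdiv_lt_0_compat; auto).
    pose proof (INR_mul_sinh_le (t / INR m) m Htm) as Hle.
    replace (INR m * (t / INR m)) with t in Hle by (field; lra).
    pose proof (sinh_nonneg _ Htm). split; [nra | auto]. }
  assert (Hden : 2 * c ^ 2 <= 2 * (INR m * sinh (t / 2 / INR m)) ^ 2 + 2 * (INR m * sin x) ^ 2).
  { pose proof (pow2_ge_0 (INR m * sinh (t / 2 / INR m))). simpl. nra. }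
  assert (0 < 2 * c ^ 2) by (simpl; nra).
  split; [apply Rdiv_le_0_compat; lra|].
  unfold Rdiv. apply Rmult_le_compat; try lra; [left; apply Rinv_0_lt_compat; lra|].
  apply Rinv_le_contravar; lra.
Qed.

Lemma ex_series_inv_odd_sq : ex_series (fun k => / (2 * INR k + 1) ^ 2).
Proof.
  set (b := fun k : nat => 2 * (/ (INR k + 1) - / (INR k + 2))).
  assert (Hb : is_series b 2).
  { assert (E : forall n, fsum b n = 2 - 2 / (INR n + 1)).
    { induction n as [|n IH]; [simpl; field|]. rewrite fsum_S, IH. unfold b. rewrite S_INR.
      pose proof (pos_INR n). field. split; lra. }
    apply is_series_fsumP. intros e He. destruct (INR_unbounded (2 / e)) as [N HN].
    exists N. intros n Hn. rewrite E. replace (2 - 2 / (INR n + 1) - 2) with (- (2 / (INR n + 1))) by ring.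
    pose proof (pos_INR n). assert (INR N <= INR n) by (apply le_INR; lia).
    rewrite Rabs_Ropp, Rabs_pos_eq by (apply Rdiv_le_0_compat; lra).
    apply Rmult_lt_reg_r with ((INR n + 1) / e); [apply Rdiv_lt_0_compat; lra|].
    field_simplify; lra. }
  apply (@ex_series_le R_AbsRing R_CompleteNormedModule _ b); [|exists 2; auto].
  intros k. change (norm (/ (2 * INR k + 1) ^ 2)) with (Rabs (/ (2 * INR k + 1) ^ 2)).
  pose proof (pos_INR k).
  rewrite Rabs_pos_eq by (left; apply Rinv_0_lt_compat, pow_lt; lra).
  unfold b. apply Rmult_le_reg_r with ((2 * INR k + 1) ^ 2 * ((INR k + 1) * (INR k + 2))).
  - apply Rmult_lt_0_compat; [apply pow_lt|]; nra.
  - field_simplify; nra.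
Qed.

Lemma tanh_partial_fractions_pos t : 0 < t ->
  is_series (fun k => 8 * t / (4 * t ^ 2 + odd_pi k ^ 2)) (tanh t).
Proof.
  intros Ht.
  apply (tannery (tanh_fin_term t) _ (fun k => sinh t / (2 * (odd_pi k / 12) ^ 2))).
  - apply (ex_series_ext (fun k => scal (sinh t * 72 / PI ^ 2) (/ (2 * INR k + 1) ^ 2))).
    + intros k. unfold scal, odd_pi; simpl. unfold mult; simpl.
      pose proof PI_RGT_0. pose proof (pos_INR k). field. split; nra.
    + apply (@ex_series_scal R_AbsRing R_NormedModule), ex_series_inv_odd_sq.
  - intros m k Hk. destruct (tanh_fin_term_bound t m k Ht Hk). rewrite Rabs_pos_eq; lra.
  - intros k. apply tanh_fin_term_cv; auto.
  - intros m Hm. symmetry. apply tanh_fsum_fin_term; auto.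
Qed.

Lemma tanh_partial_fractions t :
  is_series (fun k => 8 * t / (4 * t ^ 2 + odd_pi k ^ 2)) (tanh t).
Proof.
  assert (Hden : forall k, 0 < odd_pi k ^ 2).
  { intros k. pose proof (odd_pi_ge1 k). apply pow_lt. lra. }
  destruct (Rtotal_order t 0) as [Hn|[->|Hp]].
  - pose proof (is_series_opp _ _ (tanh_partial_fractions_pos (- t) ltac:(lra))) as H.
    replace (tanh t) with (opp (tanh (- t))).
    + eapply is_series_ext; [|exact H]. intros k. unfold opp; simpl.
      specialize (Hden k). field. nra.
    + unfold opp; simpl. unfold tanh, sinh, cosh. rewrite Ropp_involutive.
      pose proof (exp_pos t). pose proof (exp_pos (- t)). field. lra.
  - replace (tanh 0) with 0 by (unfold tanh; rewrite sinh_0; unfold Rdiv; ring).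
    eapply is_series_ext; [|exact is_series_zero]. intros k. specialize (Hden k). simpl. field. nra.
  - apply tanh_partial_fractions_pos; auto.
Qed.

(* [odd_zeta j] is [lambda(2j+2) / PI^(2j+2)], with [lambda] the Dirichlet lambda function. *)
Definition odd_zeta (j : nat) : R := Series (fun k => / odd_pi k ^ (2 * j + 2)).

Definition tanh_coef (j : nat) : R := 8 * (-4) ^ j * odd_zeta j.

Lemma ex_odd_zeta j : ex_series (fun k => / odd_pi k ^ (2 * j + 2)).
Proof.
  apply (@ex_series_le R_AbsRing R_CompleteNormedModule _ (fun k => / (2 * INR k + 1) ^ 2));
    [|apply ex_series_inv_odd_sq].
  intros k. change (norm (/ odd_pi k ^ (2 * j + 2))) with (Rabs (/ odd_pi k ^ (2 * j + 2))).
  pose proof (odd_pi_ge1 k). pose proof (pos_INR k). pose proof PI2_3_2.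
  rewrite Rabs_pos_eq by (left; apply Rinv_0_lt_compat, pow_lt; lra).
  apply Rinv_le_contravar; [apply pow_lt; lra|].
  apply Rle_trans with (odd_pi k ^ 2); [apply pow_incr; unfold odd_pi; nra|].
  apply Rle_pow; auto; lia.
Qed.

Lemma tanh_div_partial_fractions t : t <> 0 ->
  is_series (fun k => 8 / (odd_pi k ^ 2 + 4 * t ^ 2)) (tanh t / t).
Proof.
  intros Ht. pose proof (is_series_scal_r (/ t) _ _ (tanh_partial_fractions t)) as H.
  eapply is_series_ext; [|exact H]. intros k. simpl. unfold odd_pi.
  pose proof (pos_INR k). pose proof PI_RGT_0. assert (0 < t * t) by nra. field. nra.
Qed.

Lemma geom_remainder a x N : a <> 0 -> a ^ 2 + x <> 0 ->
  (-1) ^ N * (8 / (a ^ 2 + x) - fsum (fun j => 8 * (- x) ^ j / a ^ (2 * j + 2)) N) =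
  8 * x ^ N / (a ^ (2 * N) * (a ^ 2 + x)).
Proof.
  intros Ha Hx. induction N as [|N IH]; [simpl in *; field; lra|].
  assert (Hsign : (-1) ^ N * (- x) ^ N = x ^ N) by (rewrite <- Rpow_mult_distr; f_equal; ring).
  assert (HaN : a ^ (2 * N) <> 0) by (apply pow_nonzero; auto).
  rewrite fsum_S. set (Sn := fsum _ N) in *.
  replace (2 * S N)%nat with (2 * N + 2)%nat by lia. rewrite !pow_add.
  transitivity (- ((-1) ^ N * (8 / (a ^ 2 + x) - Sn)) + 8 * ((-1) ^ N * (- x) ^ N) / (a ^ (2 * N) * a ^ 2)).
  - change ((-1) ^ S N) with (-1 * (-1) ^ N). field. tauto.
  - rewrite IH, Hsign. change (x ^ S N) with (x * x ^ N). field. tauto.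
Qed.

Lemma tanh_div_remainder t N : t <> 0 ->
  is_series (fun k => 8 * (4 * t ^ 2) ^ N / (odd_pi k ^ (2 * N) * (odd_pi k ^ 2 + 4 * t ^ 2)))
    ((-1) ^ N * (tanh t / t - fsum (fun j => tanh_coef j * (t ^ 2) ^ j) N)).
Proof.
  intros Ht.
  assert (Hcoef : forall j, is_series (fun k => 8 * (- (4 * t ^ 2)) ^ j / odd_pi k ^ (2 * j + 2))
                                        (tanh_coef j * (t ^ 2) ^ j)).
  { intros j. unfold tanh_coef, odd_zeta.
    replace (8 * (-4) ^ j * Series (fun k => / odd_pi k ^ (2 * j + 2)) * (t ^ 2) ^ j) with
      (8 * (- (4 * t ^ 2)) ^ j * Series (fun k => / odd_pi k ^ (2 * j + 2)))
      by (replace (- (4 * t ^ 2)) with (-4 * t ^ 2) by ring; rewrite Rpow_mult_distr; ring).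
    apply (@is_series_scal_l R_AbsRing R_NormedModule), Series_correct, ex_odd_zeta. }
  pose proof (is_series_minus _ _ _ _ (tanh_div_partial_fractions t Ht) (is_series_fsum _ _ N Hcoef)) as H.
  apply (is_series_scal_l ((-1) ^ N)) in H.
  eapply is_series_ext; [|exact H]. intros k. unfold plus, opp, scal; simpl. unfold mult; simpl.
  pose proof (odd_pi_ge1 k). pose proof (pow2_ge_0 t).
  rewrite <- geom_remainder by nra. f_equal.
Qed.

Lemma tanh_div_remainder_pos t N : t <> 0 ->
  0 < (-1) ^ N * (tanh t / t - fsum (fun j => tanh_coef j * (t ^ 2) ^ j) N).
Proof.
  intros Ht. apply (is_series_pos _ _ (tanh_div_remainder t N Ht)). intros k.
  pose proof (odd_pi_ge1 k). assert (0 < t ^ 2) by (apply pow2_gt_0; auto).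
  apply Rdiv_lt_0_compat; [|apply Rmult_lt_0_compat; [apply pow_lt|]; nra].
  assert (0 < (4 * t ^ 2) ^ N) by (apply pow_lt; lra). lra.
Qed.

Lemma tanh_div_remainder_le t N : t <> 0 ->
  Rabs (tanh t / t - fsum (fun j => tanh_coef j * (t ^ 2) ^ j) N) <= 8 * (4 * t ^ 2) ^ N * odd_zeta 0.
Proof.
  intros Ht. set (x := 4 * t ^ 2).
  assert (Hx : 0 < x) by (unfold x; assert (0 < t ^ 2) by (apply pow2_gt_0; auto); lra).
  assert (HxN : 0 < x ^ N) by (apply pow_lt; auto).
  replace (Rabs _) with ((-1) ^ N * (tanh t / t - fsum (fun j => tanh_coef j * (t ^ 2) ^ j) N)).
  2: { pose proof (tanh_div_remainder_pos t N Ht).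
       rewrite <- (Rabs_pos_eq _ (Rlt_le _ _ H)), Rabs_mult, pow_1_abs. ring. }
  rewrite <- (is_series_unique _ _ (tanh_div_remainder t N Ht)).
  unfold odd_zeta. rewrite <- Series_scal_l. fold x.
  apply Series_le.
  - intros k. pose proof (odd_pi_ge1 k).
    assert (HA : 1 <= odd_pi k ^ (2 * N)) by (rewrite <- (pow1 (2 * N)); apply pow_incr; lra).
    assert (HB : 1 <= odd_pi k ^ 2) by (rewrite <- (pow1 2); apply pow_incr; lra).
    change (2 * 0 + 2)%nat with 2%nat. split.
    + apply Rdiv_le_0_compat; [lra | apply Rmult_lt_0_compat; lra].
    + unfold Rdiv. apply Rmult_le_compat_l; [lra|]. apply Rinv_le_contravar; [lra|]. nra.
  - apply (@ex_series_scal_l R_AbsRing R_NormedModule), (ex_odd_zeta 0).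
Qed.

Lemma is_pseries_tanh_div t : t <> 0 -> Rabs t < 1 / 2 ->
  is_pseries tanh_coef (t ^ 2) (tanh t / t).
Proof.
  intros Ht Ht2. apply is_pseries_R, is_series_fsumP. intros eps Heps.
  set (x := 4 * t ^ 2).
  assert (Hx : 0 <= x < 1).
  { unfold x. rewrite <- (pow2_abs t). pose proof (Rabs_pos t). simpl. nra. }
  assert (HZ : 0 <= odd_zeta 0).
  { rewrite <- (is_series_unique _ _ is_series_zero). apply Series_le; [|apply ex_odd_zeta].
    intros k. pose proof (odd_pi_ge1 k). split; [lra|]. left. apply Rinv_0_lt_compat, pow_lt. lra. }
  destruct (pow_lt_1_zero x ltac:(rewrite Rabs_pos_eq; lra) (eps / (8 * odd_zeta 0 + 1)))
    as [N HN]; [apply Rdiv_lt_0_compat; lra|].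
  exists N. intros n Hn. rewrite Rabs_minus_sym.
  eapply Rle_lt_trans; [apply (tanh_div_remainder_le t n Ht)|]. fold x.
  specialize (HN n Hn). rewrite Rabs_pos_eq in HN by (apply pow_le; lra).
  apply Rmult_lt_compat_l with (r := 8 * odd_zeta 0 + 1) in HN; [|lra].
  replace ((8 * odd_zeta 0 + 1) * (eps / (8 * odd_zeta 0 + 1))) with eps in HN by (field; lra).
  assert (0 <= x ^ n) by (apply pow_le; lra). nra.
Qed.

(* [tanh_coef j] sits at [t^(2j+2)]; the odd coefficients vanish. *)
Definition mul_tanh_coef (n : nat) : R :=
  if Nat.even n then PS_incr_1 tanh_coef (Nat.div2 n) else 0.

Lemma mul_tanh_coef_even j : mul_tanh_coef (2 * S j) = tanh_coef j.
Proof. unfold mul_tanh_coef. rewrite Nat.even_mul, Nat.div2_double. reflexivity. Qed.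

Lemma is_pseries_mul_tanh t : t <> 0 -> Rabs t < 1 / 2 ->
  is_pseries mul_tanh_coef t (t * tanh t).
Proof.
  intros Ht Ht2.
  assert (Hodd : is_pseries (fun n => mul_tanh_coef (2 * n + 1)) (t ^ 2) 0).
  { apply is_pseries_R. eapply is_series_ext; [|exact is_series_zero]. intros n.
    unfold mul_tanh_coef. rewrite Nat.add_1_r, Nat.even_succ, Nat.odd_mul. simpl. ring. }
  replace (t * tanh t) with (t ^ 2 * (tanh t / t) + t * 0) by (simpl; field; auto).
  apply is_pseries_odd_even; [|exact Hodd].
  eapply is_pseries_ext; [|exact (is_pseries_incr_1 _ _ _ (is_pseries_tanh_div t Ht Ht2))].
  intros n. unfold mul_tanh_coef. rewrite Nat.even_mul, Nat.div2_double. reflexivity.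
Qed.

Definition bernoulli_coef (B : nat -> R) (n : nat) : R :=
  B n * (4 ^ n - 2 ^ n) / INR (fact n) + (if Nat.eqb n 1 then 1 else 0).

Lemma mul_tanh_exp t : t <> 0 ->
  t * tanh t = 4 * t / (exp (4 * t) - 1) - 2 * t / (exp (2 * t) - 1) + t.
Proof.
  intros Ht. set (e := exp t).
  assert (He : 0 < e) by apply exp_pos.
  assert (He1 : e * e <> 1).
  { intros E. apply Ht, exp_inv. fold e. replace (exp 0) with 1 by (symmetry; apply exp_0). nra. }
  replace (exp (2 * t)) with (e * e) by (unfold e; rewrite <- exp_plus; f_equal; ring).
  replace (exp (4 * t)) with (e * e * (e * e)) by (unfold e; rewrite <- !exp_plus; f_equal; ring).
  unfold tanh, sinh, cosh. replace (exp (- t)) with (/ e) by (unfold e; rewrite exp_Ropp; auto).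
  assert (e * e * (e * e) - 1 <> 0) by (intros E; apply He1; nra).
  fold e. field. repeat split; nra.
Qed.

Lemma is_pseries_bernoulli_coef B t : bernoulli_gf B -> t <> 0 -> Rabs t < 3 / 4 ->
  is_pseries (bernoulli_coef B) t (t * tanh t).
Proof.
  intros HB Ht Ht2. pose proof PI2_3_2.
  assert (Hgf : forall c, 0 < c <= 4 ->
            is_series (fun n => B n * (c * t) ^ n / INR (fact n)) (c * t / (exp (c * t) - 1))).
  { intros c Hc. apply is_series_Reals, HB; [nra|].
    rewrite Rabs_mult, Rabs_pos_eq by lra. nra. }
  assert (Hid : is_series (fun n => (if Nat.eqb n 1 then 1 else 0) * t ^ n) t).
  { apply is_series_fsumP. intros e He. exists 2%nat. intros n Hn.
    replace n with (S (S (n - 2))) by lia. induction (n - 2)%nat as [|m IH].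
    - simpl. rewrite Rminus_diag_eq, Rabs_R0 by ring. auto.
    - rewrite fsum_S, Rmult_0_l, Rplus_0_r. exact IH. }
  pose proof (is_series_minus _ _ _ _ (Hgf 4 ltac:(lra)) (Hgf 2 ltac:(lra))) as Hdiff.
  pose proof (is_series_plus _ _ _ _ Hdiff Hid) as Hsum.
  apply is_pseries_R. rewrite mul_tanh_exp by auto.
  eapply is_series_ext; [|exact Hsum]. intros n. unfold plus, opp; simpl. unfold bernoulli_coef.
  rewrite !Rpow_mult_distr. pose proof (INR_fact_neq_0 n). field. auto.
Qed.

Lemma CV_radius_gt0_of_is_pseries a x l : x <> 0 -> is_pseries a x l -> Rbar_lt 0 (CV_radius a).
Proof.
  intros Hx Ha. apply is_pseries_R in Ha.
  assert (Hle : Rbar_le (Rabs x) (CV_radius a)).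
  { apply Rbar_not_lt_le. intros Hlt. apply (CV_disk_outside a x Hlt).
    apply ex_series_lim_0. eexists. exact Ha. }
  eapply Rbar_lt_le_trans; [|exact Hle]. simpl. apply Rabs_pos_lt; auto.
Qed.

Lemma bernoulli_coef_eq B : bernoulli_gf B -> forall n, bernoulli_coef B n = mul_tanh_coef n.
Proof.
  intros HB n. apply PSeries_ext_recip.
  - eapply (CV_radius_gt0_of_is_pseries _ (1 / 4)); [lra|].
    apply is_pseries_bernoulli_coef; auto; [lra | rewrite Rabs_pos_eq; lra].
  - eapply (CV_radius_gt0_of_is_pseries _ (1 / 4)); [lra|].
    apply is_pseries_mul_tanh; [lra | rewrite Rabs_pos_eq; lra].
  - exists (mkposreal (1 / 4) ltac:(lra)). intros x Hx.
    change (Rabs (x - 0) < 1 / 4) in Hx. rewrite Rminus_0_r in Hx.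
    destruct (Req_dec x 0) as [->|Hx0].
    + rewrite !PSeries_0. unfold bernoulli_coef, mul_tanh_coef. simpl. unfold zero; simpl. field.
    + rewrite (is_pseries_unique _ _ _ (is_pseries_bernoulli_coef B x HB Hx0 ltac:(lra))).
      rewrite (is_pseries_unique _ _ _ (is_pseries_mul_tanh x Hx0 ltac:(lra))). reflexivity.
Qed.

Lemma tanh_partial_eq B N t : bernoulli_gf B ->
  tanh_partial B N t = fsum (fun j => tanh_coef j * (t ^ 2) ^ j) N.
Proof.
  intros HB. induction N as [|N IH]; [reflexivity|].
  simpl tanh_partial. rewrite fsum_S, IH. f_equal.
  pose proof (bernoulli_coef_eq B HB (2 * S N)) as Hc.
  rewrite mul_tanh_coef_even in Hc. unfold bernoulli_coef in Hc.
  replace (Nat.eqb (2 * S N) 1) with false in Hc by (symmetry; apply Nat.eqb_neq; lia).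
  unfold tanh_term. rewrite <- Hc, <- pow_mult.
  replace (2 * S N - 2)%nat with (2 * N)%nat by lia.
  replace 4 with (2 * 2) by ring. rewrite Rpow_mult_distr.
  pose proof (INR_fact_neq_0 (2 * S N)). field. auto.
Qed.

Theorem corollary1 (B : nat -> R) (HB : bernoulli_gf B) :
  (forall (N : nat) (t : R), t <> 0 ->
     (-1) ^ N * (tanh t / t - tanh_partial B N t) > 0) /\
  (forall (m : nat) (t : R), (1 <= m)%nat -> t <> 0 ->
     tanh_partial B (2 * m)%nat t < tanh t / t /\
     tanh t / t < tanh_partial B (2 * m - 1)%nat t).
Proof.
  assert (Hsign : forall N t, t <> 0 -> (-1) ^ N * (tanh t / t - tanh_partial B N t) > 0).
  { intros N t Ht. rewrite (tanh_partial_eq B N t HB). apply tanh_div_remainder_pos; auto. }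
  split; [exact Hsign|]. intros m t Hm Ht. split.
  - pose proof (Hsign (2 * m)%nat t Ht) as H. rewrite pow_1_even in H. lra.
  - pose proof (Hsign (S (2 * (m - 1))) t Ht) as H. rewrite pow_1_odd in H.
    replace (2 * m - 1)%nat with (S (2 * (m - 1))) by lia. lra.
Qed.
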